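(* Let $n\ge1$ and let $c\in\mathfrak{S}_{n+1}$ be a Coxeter element. For every $\boldsymbol\pi\in\mathcal{ST}(c)$, we have $\mathrm{rev}_n(\boldsymbol\pi)\in\mathcal{ST}(\mathrm{rev}_{n+1}(c))$.
   Context: Coxeter element of $\mathfrak{S}_{n+1}$: product of $s_1,\dots,s_n$ ($s_i=(i,i+1)$), each exactly once; it is a long cycle $(c_1=1<c_2<\dots<c_m=n+1>c_{m+1}>\dots>c_{n+1})$, with $\mathbf L_c=\{c_2,\dots,c_{m-1}\}$, $\mathbf R_c=\{c_{m+1},\dots,c_{n+1}\}$. $\mathrm{rev}_{n+1}(c)=wcw^{-1}$ where $w\in\mathfrak{S}_{n+1}$, $w(i)=n+2-i$. For an $n$-tuple of partitions $\boldsymbol\pi=(\pi^1,\dots,\pi^n)$, $\mathrm{rev}_n(\boldsymbol\pi)=(\pi^n,\pi^{n-1},\dots,\pi^1)$. Storability: partitions are weakly decreasing sequences of nonnegative integers with finitely many nonzero terms. A pair $(\lambda,\mu)$ is storable if $\lambda_i\ge\mu_i\ge\lambda_{i+1}$ for all $i\ge1$. A triple $(\lambda,\mu,\nu)$ is $(\boxplus,\boxplus)$-storable if $(\lambda,\mu)$ and $(\nu,\mu)$ are storable; $(\boxplus,\boxminus)$-storable if $(\lambda,\mu)$ and $(\mu,\nu)$ are; $(\boxminus,\boxplus)$-storable if $(\mu,\lambda)$ and $(\nu,\mu)$ are; $(\boxminus,\boxminus)$-storable if $(\mu,\lambda)$ and $(\mu,\nu)$ are. For $\boldsymbol\pi=(\pi^1,\dots,\pi^n)$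 set $\pi^0=\pi^{n+1}=(0)$; $\boldsymbol\pi$ is $X$-storable at $i$ if $(\pi^{i-1},\pi^i,\pi^{i+1})$ is $X$-storable. For $\mathbf A\subset\mathbb{Z}$, $\mathbf A[-1]=\{a-1:a\in\mathbf A\}$. With $\mathbf L=\mathbf L_c\cup\{1\}$, $\mathbf R=\mathbf R_c\cup\{n+1\}$, $\boldsymbol\pi$ is $c$-storable ($\boldsymbol\pi\in\mathcal{ST}(c)$) if for every $i\in\{1,\dots,n\}$: it is $(\boxplus,\boxplus)$-storable at $i$ if $i\notin\mathbf L\cup\mathbf R[-1]$; $(\boxplus,\boxminus)$-storable at $i$ if $i\in\mathbf R[-1]\setminus\mathbf L$; $(\boxminus,\boxplus)$-storable at $i$ if $i\in\mathbf L\setminus\mathbf R[-1]$; $(\boxminus,\boxminus)$-storable at $i$ if $i\in\mathbf L\cap\mathbf R[-1]$; and $\pi^k=(0)$ for $k\notin\{\min\mathbf L,\dots,\max\mathbf R\}$. *)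

From mathcomp Require Import all_boot all_order all_fingroup.
Set Implicit Arguments. Unset Strict Implicit. Unset Printing Implicit Defensive.

(* Permutations of {1,...,n+1} are represented as 'S_(n.+1), the point
   k in {1,...,n+1} being the ordinal k-1. *)

Definition stransp (n i : nat) : 'S_(n.+1) :=
  tperm (inord i.-1 : 'I_(n.+1)) (inord i).

Definition is_coxeter (n : nat) (c : 'S_(n.+1)) : Prop :=
  exists s : seq nat, perm_eq s (iota 1 n) /\
    c = (\prod_(i <- s) stransp n i)%g.

Definition cyc (n : nat) (c : 'S_(n.+1)) (k : nat) : nat :=
  (val ((c ^+ k)%g ord0)).+1.

(* Writing the long cycle as (c_1 = 1, c_2, ..., c_{n+1}) with c_{j+1} = c(c_j)
   = c^j(1), and c_m = n+1:
   L_c = {c_2,...,c_{m-1}},  R_c = {c_{m+1},...,c_{n+1}}. *)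
Definition Lc (n : nat) (c : 'S_(n.+1)) (j : nat) : Prop :=
  exists k, 0 < k /\ (forall k', k' <= k -> cyc c k' <> n.+1) /\ cyc c k = j.

Definition Rc (n : nat) (c : 'S_(n.+1)) (j : nat) : Prop :=
  exists k, (exists m, m < k /\ cyc c m = n.+1) /\
            (forall k', 0 < k' <= k -> cyc c k' <> 1) /\ cyc c k = j.

Definition Lset (n : nat) (c : 'S_(n.+1)) (j : nat) : Prop := j = 1 \/ Lc c j.
Definition Rset (n : nat) (c : 'S_(n.+1)) (j : nat) : Prop := j = n.+1 \/ Rc c j.

(* w(i) = n+2-i, rev_{n+1}(c) = w c w^{-1} *)
Definition wrev (n : nat) : 'S_(n.+1) := perm (@rev_ord_inj n.+1).
Definition revc (n : nat) (c : 'S_(n.+1)) : 'S_(n.+1) :=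
  (wrev n * c * (wrev n)^-1)%g.

(* A partition lambda = (lambda_1, lambda_2, ...) is encoded as a function
   l : nat -> nat with l i = lambda_{i+1}. *)
Definition is_partition (l : nat -> nat) : Prop :=
  (forall i, l i.+1 <= l i) /\ (exists N, forall i, N <= i -> l i = 0).

Definition zero_partition : nat -> nat := fun _ => 0.

Definition storable (l m : nat -> nat) : Prop :=
  forall i, m i <= l i /\ l i.+1 <= m i.

Inductive box := Bplus | Bminus.

Definition storable3 (a b : box) (l m r : nat -> nat) : Prop :=
  (match a with Bplus => storable l m | Bminus => storable m l end) /\
  (match b with Bplus => storable r m | Bminus => storable m r end).

(* An n-tuple of partitions (pi^1,...,pi^n) is encoded as pi : nat -> nat -> nat,
   pi k being pi^k for 1 <= k <= n (other values are irrelevant);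
   ext sets pi^0 = pi^{n+1} = (0). *)
Definition ext (n : nat) (pi : nat -> nat -> nat) (k : nat) : nat -> nat :=
  if (1 <= k <= n) then pi k else zero_partition.

Definition storable_at (n : nat) (a b : box) (pi : nat -> nat -> nat) (i : nat) :=
  storable3 a b (ext n pi i.-1) (ext n pi i) (ext n pi i.+1).

Definition tuple_of_partitions (n : nat) (pi : nat -> nat -> nat) : Prop :=
  forall k, 1 <= k <= n -> is_partition (pi k).

Definition ST (n : nat) (c : 'S_(n.+1)) (pi : nat -> nat -> nat) : Prop :=
  tuple_of_partitions n pi /\
  (forall i, 1 <= i <= n ->
     (~ Lset c i /\ ~ Rset c i.+1 -> storable_at n Bplus Bplus pi i) /\
     (Rset c i.+1 /\ ~ Lset c i -> storable_at n Bplus Bminus pi i) /\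
     (Lset c i /\ ~ Rset c i.+1 -> storable_at n Bminus Bplus pi i) /\
     (Lset c i /\ Rset c i.+1 -> storable_at n Bminus Bminus pi i)) /\
  (forall k, 1 <= k <= n ->
     ((forall l, Lset c l -> k < l) \/ (forall r, Rset c r -> r < k)) ->
     pi k = zero_partition).

Definition revn (n : nat) (pi : nat -> nat -> nat) : nat -> nat -> nat :=
  fun k => pi (n.+1 - k).

From mathcomp Require Import all_boot all_order all_fingroup.
From mathcomp Require Import zify.
Set Implicit Arguments. Unset Strict Implicit. Unset Printing Implicit Defensive.

(* A product of distinct simple transpositions s_a, a in S, has n + 1 - |S|
   cycles: multiplying by s_a merges two cycles, since the other factors
   preserve {1, ..., a - 1} and so separate a - 1 from a.  Hence a Coxeter
   element c is an (n+1)-cycle (c_1 = 1, ..., c_m = n + 1, ..., c_{n+1}), with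
   L = {c_1, ..., c_{m-1}} and R = {c_m, ..., c_{n+1}}.  As w (n + 1) = 1, the
   cycle of rev(c) = w c w^-1 read from 1 is (w c_m, ..., w c_{n+1}, w c_1, ...,
   w c_{m-1}), so L and R of rev(c) are w R and w L.  The storability type of
   rev(c) at i is therefore that of c at n + 1 - i with the two boxes
   exchanged, which is how reversing a triple of partitions acts on
   storability. *)

Section PermOrbits.

Variable T : finType.
Implicit Types (s g : {perm T}) (x y : T).

Lemma porbit_closed s (P : pred T) x y :
  (forall z, P (s z) = P z) -> y \in porbit s x -> P y = P x.
Proof.
move=> sP /porbitP[i ->]; elim: i => [|i IHi]; first by rewrite expg0 perm1.
by rewrite expgSr permM sP.
Qed.

Lemma permX_modn s x i : (s ^+ (i %% #|porbit s x|))%g x = (s ^+ i)%g x.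
Proof.
have fixN : (s ^+ #|porbit s x|)%g x = x by rewrite permX iter_porbit.
by rewrite [in RHS](divn_eq i #|porbit s x|) expgD permM mulnC expgM
  (permX_fix _ fixN).
Qed.

Lemma permX_eq_modn s x i j :
  ((s ^+ i)%g x == (s ^+ j)%g x) = (i == j %[mod #|porbit s x|]).
Proof.
have lt_mod k : k %% #|porbit s x| < #|porbit s x|.
  by rewrite ltn_mod lt0n card_porbit_neq0.
rewrite -(permX_modn s x i) -(permX_modn s x j) !permX.
rewrite -!(nth_traject _ (lt_mod _)) nth_uniq ?size_traject //.
exact: uniq_traject_porbit.
Qed.

Lemma porbitJ s g x : porbit (s ^ g) (g x) = g @: porbit s x.
Proof.
apply/setP => y; apply/porbitP/imsetP => [[i ->]|[z /porbitP[i ->] ->]].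
  by exists ((s ^+ i)%g x); rewrite ?mem_porbit // -conjXg permJ.
by exists i; rewrite -conjXg permJ.
Qed.

Lemma card_porbits1 : #|porbits (1 : {perm T})| = #|T|.
Proof.
rewrite card_imset // => x y /eqP; rewrite eq_porbit_mem.
by move/porbitP => [i]; rewrite expg1n perm1.
Qed.

End PermOrbits.

Definition prod_stransp n (s : seq nat) : 'S_(n.+1) := (\prod_(i <- s) stransp n i)%g.

Lemma stransp_ltE n a e (x : 'I_n.+1) :
  1 <= a <= n -> a != e -> (stransp n a x < e) = (x < e).
Proof.
move=> a_range /eqP a_neq_e; rewrite /stransp.
by case: tpermP => [->|->|_ _] //; rewrite !inordK; lia.
Qed.

Lemma prod_stransp_ltE n s e (x : 'I_n.+1) :
  all (fun a => 1 <= a <= n) s -> e \notin s -> (prod_stransp n s x < e) = (x < e).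
Proof.
elim: s x => [|a s IHs] x /=; first by rewrite /prod_stransp big_nil perm1.
move=> /andP[a_range s_range]; rewrite inE negb_or => /andP[e_neq_a e_notin_s].
by rewrite /prod_stransp big_cons permM IHs // stransp_ltE // eq_sym.
Qed.

Lemma card_porbits_prod_stransp n s :
  uniq s -> all (fun a => 1 <= a <= n) s ->
  #|porbits (prod_stransp n s)| + size s = n.+1.
Proof.
elim: s => [|a s IHs] /=.
  by rewrite /prod_stransp big_nil card_porbits1 card_ord addn0.
move=> /andP[a_notin_s s_uniq] /andP[a_range s_range].
have := porbits_mul_tperm (prod_stransp n s) (inord a.-1) (inord a).
rewrite /prod_stransp big_cons -/(prod_stransp n s) -/(stransp n a).
have -> : (inord a.-1 : 'I_n.+1) \notin porbit (prod_stransp n s) (inord a).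
  apply/negP => /(porbit_closed (fun x => prod_stransp_ltE x s_range a_notin_s)).
  by rewrite !inordK; lia.
have -> : (inord a.-1 : 'I_n.+1) != inord a.
  by apply/eqP => /(congr1 val); rewrite /= !inordK; lia.
rewrite -[true.*2]/2 -[nat_of_bool true]/1 addn2 addn1 => -[card_tperm].
by rewrite -addSnnS card_tperm IHs.
Qed.

Lemma coxeter_porbitT n (c : 'S_(n.+1)) x :
  is_coxeter c -> porbit c x = [set: 'I_n.+1].
Proof.
move=> [s [s_perm ->]]; rewrite -/(prod_stransp n s).
have s_uniq : uniq s by rewrite (perm_uniq s_perm) iota_uniq.
have s_range : all (fun a => 1 <= a <= n) s.
  by apply/allP => a; rewrite (perm_mem s_perm) mem_iota; lia.
have := card_porbits_prod_stransp s_uniq s_range.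
rewrite (perm_size s_perm) size_iota => card_porbits.
have /cards1P[X porbitsE] : #|porbits (prod_stransp n s)| == 1 by apply/eqP; lia.
have porbit_X y : porbit (prod_stransp n s) y = X.
  by apply/set1P; rewrite -porbitsE; apply: imset_f.
by apply/setP => y; rewrite inE -eq_porbit_mem !porbit_X eqxx.
Qed.

Lemma cyc0 n (d : 'S_(n.+1)) : cyc d 0 = 1.
Proof. by rewrite /cyc expg0 perm1. Qed.

Lemma cyc_gt0 n (d : 'S_(n.+1)) t : 0 < cyc d t.
Proof. by []. Qed.

Lemma cyc_le n (d : 'S_(n.+1)) t : cyc d t <= n.+1.
Proof. exact: ltn_ord. Qed.

Section LongCycle.

Variables (n : nat) (d : 'S_(n.+1)).
Hypothesis d_long : porbit d ord0 = [set: 'I_n.+1].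

Lemma cyc_eq_modn i j : (cyc d i == cyc d j) = (i == j %[mod n.+1]).
Proof. by rewrite /cyc eqSS val_eqE permX_eq_modn d_long cardsT card_ord. Qed.

Lemma cyc_top : 0 < n -> exists2 m, 0 < m <= n & cyc d m = n.+1.
Proof.
move=> n_gt0; have /porbitP[i top_i] : ord_max \in porbit d ord0.
  by rewrite d_long inE.
have d_i : cyc d i = n.+1 by rewrite /cyc -top_i.
have d_mod : cyc d (i %% n.+1) = n.+1.
  by rewrite -[RHS]d_i; apply/eqP; rewrite cyc_eq_modn modn_mod.
exists (i %% n.+1) => //; apply/andP; split; last by rewrite -ltnS ltn_mod.
by rewrite lt0n; apply/eqP => mod0; move: d_mod; rewrite mod0 cyc0; lia.
Qed.

Variable m : nat.
Hypotheses (m_gt0 : 0 < m) (m_le : m <= n) (d_m : cyc d m = n.+1).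

Lemma LsetE j : Lset d j <-> exists2 k, k < m & cyc d k = j.
Proof.
have top k : k <= n -> (cyc d k == n.+1) = (k == m).
  by move=> k_le; rewrite -d_m cyc_eq_modn !modn_small.
split=> [[->|[k [k_gt0 [not_top <-]]]]|[[|k] lt_km <-]].
- by exists 0; rewrite ?cyc0.
- exists k => //; rewrite ltnNge; apply/negP => le_mk; exact: not_top m le_mk d_m.
- by left; rewrite cyc0.
- right; exists k.+1; do 2 split => //.
  by move=> k' le_k' /eqP; rewrite top; lia.
Qed.

Lemma RsetE j : Rset d j <-> exists2 k, m <= k <= n & cyc d k = j.
Proof.
have top k : k <= n -> (cyc d k == n.+1) = (k == m).
  by move=> k_le; rewrite -d_m cyc_eq_modn !modn_small.
have back k : k <= n -> (cyc d k == 1) = (k == 0).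
  by move=> k_le; rewrite -(cyc0 d) cyc_eq_modn !modn_small.
split=> [[->|[k [[m' [lt_m'k top_m']] [no_back <-]]]]|[k /andP[le_mk le_kn] <-]].
- by exists m; rewrite ?leqnn.
- have le_kn : k <= n.
    rewrite leqNgt; apply/negP => lt_nk; apply: (no_back n.+1); first lia.
    by apply/eqP; rewrite -(cyc0 d) cyc_eq_modn modnn mod0n.
  by exists k => //; move/eqP: top_m'; rewrite top; lia.
- have [-> | ne_km] := eqVneq k m; first by left.
  right; exists k; split; first by exists m; split => //; lia.
  by split => // k' /andP[k'_gt0 le_k'k] /eqP; rewrite back; lia.
Qed.

End LongCycle.

Lemma wrevE n (x : 'I_n.+1) : val (wrev n x) = n - x.
Proof. by rewrite /wrev permE /= subSS. Qed.

Lemma wrev_max n : wrev n ord_max = ord0.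
Proof. by apply: val_inj; rewrite wrevE subnn. Qed.

Lemma wrevV n : (wrev n)^-1%g = wrev n.
Proof.
apply/eqP; rewrite eq_invg_mul; apply/eqP/permP => x.
by apply: val_inj; rewrite permM perm1 !wrevE subKn // -ltnS.
Qed.

Lemma revcE n (c : 'S_(n.+1)) : revc c = (c ^ wrev n)%g.
Proof. by rewrite /revc /conjg wrevV mulgA. Qed.

Lemma revcK n : involutive (@revc n).
Proof.
by move=> c; rewrite !revcE -conjgM -{1}wrevV mulVg conjg1.
Qed.

Lemma cyc_revc n (c : 'S_(n.+1)) m k :
  cyc c m = n.+1 -> cyc (revc c) k = n.+2 - cyc c (m + k).
Proof.
move=> c_m; have top : (c ^+ m)%g ord0 = ord_max by apply: val_inj; case: c_m.
rewrite /cyc.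
have -> : (revc c ^+ k)%g ord0 = wrev n ((c ^+ (m + k))%g ord0).
  by rewrite revcE -conjXg -{1}wrev_max permJ expgD permM top.
by rewrite wrevE subSS subSn // -ltnS; exact: ltn_ord.
Qed.

Lemma revc_porbitT n (c : 'S_(n.+1)) :
  porbit c ord0 = [set: 'I_n.+1] -> porbit (revc c) ord0 = [set: 'I_n.+1].
Proof.
move=> c_long; have max_long : porbit c ord_max = [set: 'I_n.+1].
  by rewrite -c_long; apply/eqP; rewrite eq_porbit_mem c_long inE.
rewrite revcE -wrev_max porbitJ max_long.
by apply/eqP; rewrite eqEcard subsetT card_imset ?leqnn //; exact: perm_inj.
Qed.

Section ReverseLR.

Variables (n : nat) (c : 'S_(n.+1)).
Hypotheses (n_gt0 : 0 < n) (c_long : porbit c ord0 = [set: 'I_n.+1]).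

Lemma Lset_revc i : Lset (revc c) i <-> Rset c (n.+2 - i).
Proof.
have [m /andP[m_gt0 m_le] c_m] := cyc_top c_long n_gt0.
have rc_m : cyc (revc c) (n.+1 - m) = n.+1.
  have c_period : cyc c n.+1 = 1.
    by apply/eqP; rewrite -(cyc0 c) (cyc_eq_modn c_long) modnn mod0n.
  by rewrite (cyc_revc _ c_m) subnKC ?c_period // ltnW.
rewrite (LsetE (revc_porbitT c_long) _ _ rc_m); try lia.
rewrite (RsetE c_long m_gt0 m_le c_m).
split=> [[k lt_k <-]|[k /andP[le_mk le_kn] c_k]].
- exists (m + k); first lia.
  by rewrite (cyc_revc _ c_m); have := cyc_le c (m + k); lia.
- exists (k - m); first lia.
  by rewrite (cyc_revc _ c_m) subnKC // c_k; have := cyc_gt0 c k; lia.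
Qed.

End ReverseLR.

Lemma Rset_revc n (c : 'S_(n.+1)) i :
  0 < n -> porbit c ord0 = [set: 'I_n.+1] -> i <= n.+2 ->
  Rset (revc c) i <-> Lset c (n.+2 - i).
Proof.
move=> n_gt0 c_long le_i.
by rewrite -{2}(revcK c) (Lset_revc n_gt0 (revc_porbitT c_long)) subKn.
Qed.

Lemma storable3_sym a b l m r : storable3 a b l m r <-> storable3 b a r m l.
Proof. by split=> -[]. Qed.

Lemma ext_revn n pi k : k <= n.+1 -> ext n (revn n pi) k = ext n pi (n.+1 - k).
Proof.
by move=> le_k; rewrite /ext /revn; case: ifP; case: ifP => //; lia.
Qed.

Lemma storable_at_revn n a b pi i :
  1 <= i <= n -> storable_at n a b (revn n pi) i <-> storable_at n b a pi (n.+1 - i).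
Proof.
move=> i_range; rewrite /storable_at !ext_revn; try lia.
rewrite (_ : n.+1 - i.-1 = (n.+1 - i).+1); last lia.
rewrite (_ : n.+1 - i.+1 = (n.+1 - i).-1); last lia.
exact: storable3_sym.
Qed.

Theorem lemma4p9 (n : nat) (c : 'S_(n.+1)) (pi : nat -> nat -> nat) :
  1 <= n -> is_coxeter c -> ST c pi -> ST (revc c) (revn n pi).
Proof.
move=> n_gt0 cox [pi_part [pi_storable _]].
have c_long := coxeter_porbitT ord0 cox.
split; [|split].
- by move=> k k_range; apply: pi_part; lia.
- move=> i i_range.
  have L_rev : Lset (revc c) i <-> Rset c (n.+1 - i).+1.
    by rewrite (Lset_revc n_gt0 c_long) (_ : n.+2 - i = (n.+1 - i).+1); last lia.
  have R_rev : Rset (revc c) i.+1 <-> Lset c (n.+1 - i).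
    by rewrite (Rset_revc n_gt0 c_long); [rewrite subSS | lia].
  rewrite !storable_at_revn // L_rev R_rev.
  have /pi_storable[PP [PM [MP MM]]] : 1 <= n.+1 - i <= n by lia.
  by split; [|split; [|split]] => -[? ?]; [apply: PP|apply: MP|apply: PM|apply: MM].
- move=> k k_range [L_above|R_below].
  + by have := L_above 1 (or_introl erefl); lia.
  + by have := R_below n.+1 (or_introl erefl); lia.
Qed.
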